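(* Let $s>1$. There exists a function $f:\mathbb{R}\to\mathbb{C}$ such that $f\in C_{ap}(\mathbb{R})\cap G^s(\mathbb{R})$, but for no constants $B,C>0$ does the estimate $$\sup_{x\in\mathbb{R}}|f^{(j)}(x)|\le B\,C^{j}(j!)^s\quad\text{for all } j=0,1,2,\dots$$ hold.
   Context: $C_{ap}(\mathbb{R})$ denotes the space of (Bohr) uniformly almost periodic functions on $\mathbb{R}$, i.e. the closure in the supremum norm of the trigonometric polynomials $\sum_{\xi}a_\xi e^{2\pi i \xi x}$ (finite sums, $a_\xi\in\mathbb{C}$, $\xi\in\mathbb{R}$). For $s\ge1$ and an open set $\Omega\subseteq\mathbb{R}^d$, the Gevrey space $G^s(\Omega)$ is the set of $f\in C^\infty(\Omega)$ such that for every compact $K\subseteq\Omega$ there is $C_K>0$ with $\sup_{x\in K}|\partial^\alpha f(x)|\le C_K^{1+|\alpha|}(\alpha!)^s$ for all $\alpha\in\mathbb{N}^d$. *)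

(* classical reals. A complex-valued function f = u + i v is
   represented by its real and imaginary parts u, v : R -> R. *)
From Stdlib Require Import Reals List Factorial.
Open Scope R_scope.

Definition cmod (a b : R) : R := sqrt (a ^ 2 + b ^ 2).

Definition derivs_of (f : R -> R) (D : nat -> R -> R) : Prop :=
  (forall x, D 0%nat x = f x) /\
  (forall (j : nat) (x : R), derivable_pt_lim (D j) x (D (S j) x)).

(* Trigonometric polynomial  sum_k (p_k + i q_k) e^{2 pi i xi_k x},
   list entries are (xi_k, p_k, q_k); real and imaginary parts. *)
Definition trig_re (l : list (R * R * R)) (x : R) : R :=
  fold_right (fun '(xi, p, q) acc =>
    p * cos (2 * PI * xi * x) - q * sin (2 * PI * xi * x) + acc) 0 l.
Definition trig_im (l : list (R * R * R)) (x : R) : R :=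
  fold_right (fun '(xi, p, q) acc =>
    p * sin (2 * PI * xi * x) + q * cos (2 * PI * xi * x) + acc) 0 l.

Definition almost_periodic (u v : R -> R) : Prop :=
  forall eps, eps > 0 -> exists l : list (R * R * R),
    forall x, cmod (u x - trig_re l x) (v x - trig_im l x) <= eps.

Definition gevrey (s : R) (Du Dv : nat -> R -> R) : Prop :=
  forall K : R -> Prop, compact K ->
    exists CK, CK > 0 /\
      forall (j : nat) (x : R), K x ->
        cmod (Du j x) (Dv j x) <= CK ^ (S j) * Rpower (INR (fact j)) s.

From Stdlib Require Import Reals List Factorial Lra Lia.
Open Scope R_scope.

(* Take f(x) = sum_n 2^-n (e^(i lam_n x) - e^(i mu_n x)) with lam_n = 16^n and
   mu_n = lam_n + eps_n, eps_n super-exponentially small.  Every partial sum is a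
   trigonometric polynomial and the n-th beat is bounded by 2^(1-n), so f is almost
   periodic.  The j-th derivative of the n-th beat is O(2^-n eps_n mu_n^j (j + |x|))
   and eps_n mu_n^j <= j! because eps_n <= L^-L and L^j <= L^L j! for L = lam_n + 1,
   so f is Gevrey (even of order 1) on compact sets.  But at x_n = pi / eps_n the two
   exponentials of the n-th beat are in antiphase, so its derivative has modulus
   about 2 * 8^n there, while the earlier beats contribute O(8^m) and the later ones
   only O(2^-m), since lam_m eps_m x_n <= pi / 8: f' is unbounded. *)

Lemma cmod_le_abs (a b : R) : cmod a b <= Rabs a + Rabs b.
Proof.
  unfold cmod. pose proof (Rabs_pos a); pose proof (Rabs_pos b).
  rewrite <- (sqrt_pow2 (Rabs a + Rabs b)) by lra.
  apply sqrt_le_1_alt.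
  rewrite <- (pow2_abs a), <- (pow2_abs b). nra.
Qed.

Lemma cmod_ge_proj (a b c s : R) : c ^ 2 + s ^ 2 = 1 -> a * c + b * s <= cmod a b.
Proof.
  intro Hcs. unfold cmod.
  destruct (Rle_dec (a * c + b * s) 0) as [Hneg | Hpos].
  { pose proof (sqrt_pos (a ^ 2 + b ^ 2)); lra. }
  rewrite <- (sqrt_pow2 (a * c + b * s)) by lra.
  apply sqrt_le_1_alt.
  assert (Hid : (a * c + b * s) ^ 2 + (a * s - b * c) ^ 2 = (a ^ 2 + b ^ 2) * (c ^ 2 + s ^ 2))
    by ring.
  pose proof (pow2_ge_0 (a * s - b * c)). rewrite Hcs in Hid. lra.
Qed.

Lemma cos_lipschitz (a b : R) : Rabs (cos a - cos b) <= Rabs (a - b).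
Proof.
  destruct (MVT_abs cos (fun c => - sin c) b a) as [c [Hc _]].
  { intros; apply derivable_pt_lim_cos. }
  rewrite Hc, Rabs_Ropp.
  assert (Rabs (sin c) <= 1) by (apply Rabs_le, SIN_bound).
  pose proof (Rabs_pos (a - b)). nra.
Qed.

Lemma pow_sub_pow_le (l m : R) (j : nat) :
  0 <= l <= m -> 1 <= m -> m ^ j - l ^ j <= INR j * (m - l) * m ^ j.
Proof.
  intros [Hl Hlm] Hm. induction j as [| j IH]; [simpl; lra |].
  rewrite S_INR. simpl pow.
  assert (0 <= l ^ j <= m ^ j) by (split; [apply pow_le | apply pow_incr]; lra).
  pose proof (pos_INR j).
  replace (m * m ^ j - l * l ^ j) with (m * (m ^ j - l ^ j) + l ^ j * (m - l)) by ring.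
  assert (m * (m ^ j - l ^ j) <= m * (INR j * (m - l) * m ^ j))
    by (apply Rmult_le_compat_l; lra).
  assert (m ^ j <= m * m ^ j) by nra.
  nra.
Qed.

Lemma pow_INR_le_fact (L j : nat) : (1 <= L)%nat -> INR L ^ j <= INR L ^ L * INR (fact j).
Proof.
  intro HL. apply (le_INR 1) in HL; rewrite INR_1 in HL.
  assert (Hfact : forall k, 1 <= INR (fact k)) by (intro k; apply (le_INR 1), lt_O_fact).
  assert (HLL : 1 <= INR L ^ L) by (apply pow_R1_Rle; exact HL).
  induction j as [| j IH]; [simpl; lra |].
  destruct (Compare_dec.le_lt_dec (S j) L) as [Hj | Hj].
  - assert (INR L ^ S j <= INR L ^ L) by (apply Rle_pow; auto).
    pose proof (Hfact (S j)). nra.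
  - rewrite fact_simpl, mult_INR. simpl pow.
    assert (INR L <= INR (S j)) by (apply le_INR; lia).
    assert (0 <= INR L ^ j) by (apply pow_le; lra).
    pose proof (Hfact j). nra.
Qed.

Lemma INR_succ_le_pow (c : R) (j : nat) : 2 <= c -> INR j + 1 <= c ^ j.
Proof.
  intro Hc. induction j as [| j IH]; [simpl; lra |].
  rewrite S_INR. simpl pow. pose proof (pow_R1_Rle c j ltac:(lra)). nra.
Qed.

Lemma fact_le_Rpower (j : nat) (s : R) : 1 <= s -> INR (fact j) <= Rpower (INR (fact j)) s.
Proof.
  intro Hs. assert (1 <= INR (fact j)) by (apply (le_INR 1), lt_O_fact).
  rewrite <- (Rpower_1 (INR (fact j))) at 1 by lra.
  apply Rle_Rpower; lra.
Qed.

Lemma pow_inv2_bounds (n : nat) : 0 <= (/ 2) ^ n <= 1.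
Proof.
  split; [apply pow_le; lra |].
  pose proof (pow_incr (/ 2) 1 n ltac:(lra)). rewrite pow1 in *. lra.
Qed.

Lemma geometric_sum (K : R) (N : nat) :
  sum_f_R0 (fun n => K * (/ 2) ^ n) N = 2 * K - K * (/ 2) ^ N.
Proof. induction N as [| N IH]; [simpl; ring |]. rewrite tech5, IH. simpl pow. field. Qed.

Lemma Un_cv_const (c : R) : Un_cv (fun _ => c) c.
Proof. intros e He. exists O. intros. unfold Rdist. rewrite Rminus_diag, Rabs_R0. exact He. Qed.

Lemma geometric_series_cv (K : R) :
  Un_cv (fun N => sum_f_R0 (fun n => K * (/ 2) ^ n) N) (2 * K).
Proof.
  assert (Hgp : Un_cv (fun N => sum_f_R0 (fun n => 1 * (/ 2) ^ n) N) 2).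
  { pose proof (GP_infinite (/ 2) ltac:(rewrite Rabs_pos_eq; lra)) as H.
    replace (/ (1 - / 2)) with 2 in H by field. exact H. }
  apply (Un_cv_ext (fun N => sum_f_R0 (fun n => 1 * (/ 2) ^ n) N * K)).
  { intro N. rewrite (Rmult_comm _ K), scal_sum. apply sum_eq. intros; ring. }
  exact (CV_mult _ _ _ _ Hgp (Un_cv_const K)).
Qed.

Section GeometricDomination.
Variables (t : nat -> R) (K : R).
Hypothesis t_le : forall n, Rabs (t n) <= K * (/ 2) ^ n.

Lemma geometric_domination_cv : {l : R | Un_cv (fun N => sum_f_R0 t N) l}.
Proof.
  apply cv_cauchy_2, cauchy_abs, cv_cauchy_1.
  apply (Rseries_CV_comp _ (fun n => K * (/ 2) ^ n)).
  - intro n; split; [apply Rabs_pos | apply t_le].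
  - exists (2 * K); apply geometric_series_cv.
Qed.

Variable l : R.
Hypothesis t_cv : Un_cv (fun N => sum_f_R0 t N) l.

Lemma geometric_domination_tail (N : nat) : Rabs (l - sum_f_R0 t N) <= K * (/ 2) ^ N.
Proof.
  pose proof (sum_maj1 (fun n _ => t n) _ 0 l _ N t_cv (geometric_series_cv K) t_le) as H.
  unfold SP in H. rewrite geometric_sum in H.
  replace (2 * K - (2 * K - K * (/ 2) ^ N)) with (K * (/ 2) ^ N) in H by ring. exact H.
Qed.

Lemma geometric_domination_abs : Rabs l <= 2 * K.
Proof. exact (sum_cv_maj _ (fun n _ => t n) 0 l _ t_cv (geometric_series_cv K) t_le). Qed.

End GeometricDomination.

Lemma Un_cv_ge_eventually (u : nat -> R) (l b : R) (n : nat) :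
  Un_cv u l -> (forall N, (n <= N)%nat -> b <= u N) -> b <= l.
Proof.
  intros Hl Hb. destruct (Rle_dec b l) as [Hle | Hgt]; [exact Hle |].
  destruct (Hl (b - l)) as [N HN]; [lra |].
  specialize (HN (max N n) ltac:(lia)). specialize (Hb (max N n) ltac:(lia)).
  unfold Rdist in HN. apply Rabs_def2 in HN. lra.
Qed.

Section DifferentiatedSeries.
Variables (t : nat -> nat -> R -> R) (K : nat -> R -> R).
Hypothesis t_deriv : forall n j x, derivable_pt_lim (t n j) x (t n (S j) x).
Hypothesis t_le : forall n j x r, Rabs x <= r -> Rabs (t n j x) <= K j r * (/ 2) ^ n.

Definition series_sum (j : nat) (x : R) : R :=
  proj1_sig (geometric_domination_cv (fun n => t n j x) (K j (Rabs x))
               (fun n => t_le n j x (Rabs x) (Rle_refl _))).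

Lemma series_sum_cv (j : nat) (x : R) :
  Un_cv (fun N => sum_f_R0 (fun n => t n j x) N) (series_sum j x).
Proof. unfold series_sum. destruct geometric_domination_cv; assumption. Qed.

Lemma series_sum_abs_le (j : nat) (x : R) : Rabs (series_sum j x) <= 2 * K j (Rabs x).
Proof.
  exact (geometric_domination_abs _ _ (fun n => t_le n j x (Rabs x) (Rle_refl _)) _
           (series_sum_cv j x)).
Qed.

Lemma partial_sums_CVU (j : nat) (x : R) :
  CVU (fun N y => sum_f_R0 (fun n => t n j y) N) (series_sum j) x (mkposreal 1 Rlt_0_1).
Proof.
  intros e He.
  set (r := Rabs x + 1). set (M := Rabs (K j r) + 1).
  assert (HM : 0 < M) by (pose proof (Rabs_pos (K j r)); unfold M; lra).
  destruct (pow_lt_1_zero (/ 2) ltac:(rewrite Rabs_pos_eq; lra) (e / M)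
              ltac:(apply Rdiv_lt_0_compat; lra)) as [N HN].
  exists N. intros n y Hn Hy. unfold Boule in Hy; simpl in Hy.
  assert (Hyr : Rabs y <= r).
  { replace y with ((y - x) + x) by ring. eapply Rle_trans; [apply Rabs_triang |].
    unfold r; lra. }
  pose proof (geometric_domination_tail _ (K j r) (fun m => t_le m j y r Hyr) _
                (series_sum_cv j y) n) as Htail.
  specialize (HN n Hn). rewrite Rabs_pos_eq in HN by (apply pow_le; lra).
  assert (HKM : K j r * (/ 2) ^ n <= M * (/ 2) ^ n).
  { apply Rmult_le_compat_r; [apply pow_le; lra |].
    pose proof (Rle_abs (K j r)); unfold M; lra. }
  apply (Rmult_lt_compat_l M) in HN; [| exact HM].
  replace (M * (e / M)) with e in HN by (field; lra). lra.
Qed.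

Lemma derivable_pt_lim_partial_sum (j N : nat) (x : R) :
  derivable_pt_lim (fun y => sum_f_R0 (fun n => t n j y) N) x
    (sum_f_R0 (fun n => t n (S j) x) N).
Proof.
  induction N as [| N IH]; [apply t_deriv |].
  exact (derivable_pt_lim_plus _ _ x _ _ IH (t_deriv (S N) j x)).
Qed.

Lemma derivable_pt_lim_series_sum (j : nat) (x : R) :
  derivable_pt_lim (series_sum j) x (series_sum (S j) x).
Proof.
  apply (CVU_derivable (fun N y => sum_f_R0 (fun n => t n j y) N)
           (fun N y => sum_f_R0 (fun n => t n (S j) y) N) _ _ x (mkposreal 1 Rlt_0_1)
           (partial_sums_CVU (S j) x)).
  - intros y _. apply series_sum_cv.
  - intros N y _. apply derivable_pt_lim_partial_sum.
  - unfold Boule; simpl. rewrite Rminus_diag, Rabs_R0. lra.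
Qed.

End DifferentiatedSeries.

(* [wave c phi j] is the [j]-th derivative of [x |-> cos (c x + phi)]; the phases [0] and
   [- (PI / 2)] give the real and imaginary parts of [e^(i c x)]. *)
Definition wave (c phi : R) (j : nat) (x : R) : R :=
  c ^ j * cos (c * x + phi + INR j * (PI / 2)).

Lemma cos_add_PI2 (a : R) : cos (a + PI / 2) = - sin a.
Proof. rewrite cos_plus, cos_PI2, sin_PI2. ring. Qed.

Lemma derivable_pt_lim_affine (c b x : R) : derivable_pt_lim (fun y => c * y + b) x c.
Proof.
  pose proof (derivable_pt_lim_plus _ _ x _ _
    (derivable_pt_lim_scal id c x 1 (derivable_pt_lim_id x)) (derivable_pt_lim_const b x)) as H.
  replace (c * 1 + 0) with c in H by ring. exact H.
Qed.

Lemma derivable_pt_lim_wave (c phi : R) (j : nat) (x : R) :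
  derivable_pt_lim (wave c phi j) x (wave c phi (S j) x).
Proof.
  set (b := phi + INR j * (PI / 2)).
  pose proof (derivable_pt_lim_scal _ (c ^ j) x _ (derivable_pt_lim_comp _ cos x _ _
                (derivable_pt_lim_affine c b x) (derivable_pt_lim_cos _))) as H.
  replace (wave c phi (S j) x) with (c ^ j * (- sin (c * x + b) * c)).
  - refine (derivable_pt_lim_ext _ _ _ _ _ H).
    intro z. unfold wave, mult_real_fct, comp, b. rewrite Rplus_assoc. reflexivity.
  - unfold wave, b. rewrite S_INR, <- cos_add_PI2. simpl pow.
    replace (c * x + phi + (INR j + 1) * (PI / 2))
      with (c * x + (phi + INR j * (PI / 2)) + PI / 2) by ring. ring.
Qed.

Lemma Rabs_wave_le (c phi : R) (j : nat) (x : R) : 0 <= c -> Rabs (wave c phi j x) <= c ^ j.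
Proof.
  intro Hc. unfold wave. rewrite Rabs_mult, Rabs_pos_eq by (apply pow_le; exact Hc).
  assert (Rabs (cos (c * x + phi + INR j * (PI / 2))) <= 1) by (apply Rabs_le, COS_bound).
  pose proof (pow_le c j Hc). nra.
Qed.

Lemma wave_sub_le (l m phi : R) (j : nat) (x : R) : 0 <= l <= m -> 1 <= m ->
  Rabs (wave l phi j x - wave m phi j x) <= (m - l) * m ^ j * (INR j + Rabs x).
Proof.
  intros Hlm Hm. unfold wave.
  set (A := l * x + phi + INR j * (PI / 2)). set (B := m * x + phi + INR j * (PI / 2)).
  replace (l ^ j * cos A - m ^ j * cos B)
    with (l ^ j * (cos A - cos B) - (m ^ j - l ^ j) * cos B) by ring.
  assert (Hpow : 0 <= l ^ j <= m ^ j) by (split; [apply pow_le | apply pow_incr]; lra).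
  assert (HAB : Rabs (cos A - cos B) <= (m - l) * Rabs x).
  { eapply Rle_trans; [apply cos_lipschitz |].
    replace (A - B) with ((l - m) * x) by (unfold A, B; ring).
    rewrite Rabs_mult, Rabs_minus_sym, (Rabs_pos_eq (m - l)) by lra. lra. }
  assert (HB : Rabs (cos B) <= 1) by (apply Rabs_le, COS_bound).
  pose proof (pow_sub_pow_le l m j Hlm Hm).
  eapply Rle_trans; [apply Rabs_triang |].
  rewrite Rabs_Ropp, !Rabs_mult, (Rabs_pos_eq (l ^ j)), (Rabs_pos_eq (m ^ j - l ^ j)) by lra.
  pose proof (Rabs_pos x). pose proof (Rabs_pos (cos A - cos B)). pose proof (Rabs_pos (cos B)).
  assert (l ^ j * Rabs (cos A - cos B) <= m ^ j * ((m - l) * Rabs x)).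
  { apply Rmult_le_compat; lra. }
  assert ((m ^ j - l ^ j) * Rabs (cos B) <= m ^ j - l ^ j) by nra.
  nra.
Qed.

Definition lam (n : nat) : R := 16 ^ n.
Definition mu_cap (n : nat) : nat := S (16 ^ n).

(* [eps n * mu_cap n ^ mu_cap n <= 1] makes the beats locally Gevrey, and
   [8 * eps m * mu_cap m <= eps n] for [n < m] makes the later beats negligible
   where the [n]-th one peaks. *)
Fixpoint eps (n : nat) : R :=
  match n with
  | O => / (INR (mu_cap 0) ^ mu_cap 0)
  | S k => eps k / (8 * INR (mu_cap (S k)) ^ mu_cap (S k))
  end.

Definition mu (n : nat) : R := lam n + eps n.
Definition amp (n : nat) : R := (/ 2) ^ n.

Lemma lam_ge1 (n : nat) : 1 <= lam n.
Proof. apply pow_R1_Rle; lra. Qed.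

Lemma INR_mu_cap (n : nat) : INR (mu_cap n) = lam n + 1.
Proof.
  unfold mu_cap, lam. rewrite S_INR, pow_INR.
  replace (INR 16) with 16 by (simpl; ring). reflexivity.
Qed.

Lemma mu_cap_le_pow (n : nat) : 1 <= INR (mu_cap n) <= INR (mu_cap n) ^ mu_cap n.
Proof.
  assert (H1 : 1 <= INR (mu_cap n)) by (rewrite INR_mu_cap; pose proof (lam_ge1 n); lra).
  split; [exact H1 |].
  rewrite <- (pow_1 (INR (mu_cap n))) at 1. apply Rle_pow; [exact H1 | unfold mu_cap; lia].
Qed.

Lemma eps_pos (n : nat) : 0 < eps n.
Proof.
  pose proof mu_cap_le_pow as Hcap.
  induction n as [| n IH]; cbn [eps].
  - apply Rinv_0_lt_compat. specialize (Hcap 0%nat); lra.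
  - specialize (Hcap (S n)). apply Rdiv_lt_0_compat; lra.
Qed.

Lemma eps_mul_cap_pow_le (n : nat) : eps n * INR (mu_cap n) ^ mu_cap n <= 1.
Proof.
  pose proof mu_cap_le_pow as Hcap.
  induction n as [| n IH]; cbn [eps].
  - rewrite Rinv_l; [lra |]. specialize (Hcap 0%nat); lra.
  - pose proof (eps_pos n). specialize (Hcap n) as Hn. specialize (Hcap (S n)).
    field_simplify; [| lra]. nra.
Qed.

Lemma eps_le1 (n : nat) : eps n <= 1.
Proof.
  pose proof (eps_mul_cap_pow_le n). pose proof (mu_cap_le_pow n). pose proof (eps_pos n). nra.
Qed.

Lemma eps_succ_le (n : nat) : 8 * eps (S n) * INR (mu_cap (S n)) <= eps n.
Proof.
  pose proof (mu_cap_le_pow (S n)). pose proof (eps_pos n). cbn [eps].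
  apply (Rmult_le_reg_r (INR (mu_cap (S n)) ^ mu_cap (S n))); [lra |].
  field_simplify; [| lra]. nra.
Qed.

Lemma eps_far_le (n m : nat) : (n < m)%nat -> 8 * eps m * INR (mu_cap m) <= eps n.
Proof.
  intro Hnm. induction Hnm as [| m Hnm IH]; [apply eps_succ_le |].
  eapply Rle_trans; [| exact IH].
  pose proof (eps_succ_le m). pose proof (eps_pos m).
  pose proof (mu_cap_le_pow m). nra.
Qed.

Lemma lam_mu_bounds (n : nat) : 0 <= lam n <= mu n /\ 1 <= mu n <= INR (mu_cap n).
Proof.
  unfold mu. rewrite INR_mu_cap.
  pose proof (lam_ge1 n). pose proof (eps_pos n). pose proof (eps_le1 n). lra.
Qed.

Lemma amp_mul_lam (n : nat) : amp n * lam n = 8 ^ n.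
Proof. unfold amp, lam. rewrite <- Rpow_mult_distr. f_equal. field. Qed.

Definition beat (phi : R) (n j : nat) (x : R) : R :=
  amp n * (wave (lam n) phi j x - wave (mu n) phi j x).

Lemma derivable_pt_lim_beat (phi : R) (n j : nat) (x : R) :
  derivable_pt_lim (beat phi n j) x (beat phi n (S j) x).
Proof.
  exact (derivable_pt_lim_scal _ (amp n) x _ (derivable_pt_lim_minus _ _ x _ _
           (derivable_pt_lim_wave (lam n) phi j x) (derivable_pt_lim_wave (mu n) phi j x))).
Qed.

Lemma Rabs_beat_le (phi : R) (n j : nat) (x : R) :
  Rabs (beat phi n j x) <= amp n * (eps n * mu n ^ j * (INR j + Rabs x)).
Proof.
  unfold beat. rewrite Rabs_mult, (Rabs_pos_eq (amp n)) by (apply pow_le; lra).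
  apply Rmult_le_compat_l; [apply pow_le; lra |].
  destruct (lam_mu_bounds n) as [Hlm [Hmu _]].
  replace (eps n) with (mu n - lam n) by (unfold mu; ring).
  apply wave_sub_le; lra.
Qed.

Lemma Rabs_beat_le_pow_add (phi : R) (n j : nat) (x : R) :
  Rabs (beat phi n j x) <= amp n * (lam n ^ j + mu n ^ j).
Proof.
  unfold beat. rewrite Rabs_mult, (Rabs_pos_eq (amp n)) by (apply pow_le; lra).
  apply Rmult_le_compat_l; [apply pow_le; lra |].
  destruct (lam_mu_bounds n) as [Hlm _].
  pose proof (Rabs_wave_le (lam n) phi j x ltac:(lra)).
  pose proof (Rabs_wave_le (mu n) phi j x ltac:(lra)).
  eapply Rle_trans; [apply Rabs_triang |]. rewrite Rabs_Ropp. lra.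
Qed.

Lemma Rabs_beat0_le (phi : R) (n : nat) (x : R) : Rabs (beat phi n 0 x) <= 2 * (/ 2) ^ n.
Proof. pose proof (Rabs_beat_le_pow_add phi n 0 x). unfold amp in *. simpl pow in *. lra. Qed.

Lemma Rabs_beat1_le (phi : R) (n : nat) (x : R) : Rabs (beat phi n 1 x) <= 3 * 8 ^ n.
Proof.
  pose proof (Rabs_beat_le_pow_add phi n 1 x). rewrite <- amp_mul_lam.
  destruct (lam_mu_bounds n) as [_ [_ Hcap]]. rewrite INR_mu_cap in Hcap.
  pose proof (pow_inv2_bounds n) as Hamp. fold (amp n) in Hamp.
  pose proof (lam_ge1 n). simpl pow in *. nra.
Qed.

Lemma eps_mul_mu_pow_le_fact (n j : nat) : eps n * mu n ^ j <= INR (fact j).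
Proof.
  destruct (lam_mu_bounds n) as [_ [Hmu Hcap]].
  pose proof (eps_pos n). pose proof (eps_mul_cap_pow_le n).
  pose proof (pow_INR_le_fact (mu_cap n) j ltac:(unfold mu_cap; lia)).
  assert (mu n ^ j <= INR (mu_cap n) ^ j) by (apply pow_incr; lra).
  assert (1 <= INR (fact j)) by (apply (le_INR 1), lt_O_fact).
  apply Rle_trans with (eps n * (INR (mu_cap n) ^ mu_cap n * INR (fact j))); [| nra].
  apply Rmult_le_compat_l; lra.
Qed.

Definition gevrey_weight (j : nat) (r : R) : R := INR (fact j) * (INR j + r).

Lemma Rabs_beat_le_weight (phi : R) (n j : nat) (x r : R) :
  Rabs x <= r -> Rabs (beat phi n j x) <= gevrey_weight j r * (/ 2) ^ n.
Proof.
  intro Hx. eapply Rle_trans; [apply Rabs_beat_le |].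
  unfold gevrey_weight, amp. rewrite Rmult_comm.
  apply Rmult_le_compat_r; [apply pow_le; lra |].
  pose proof (pos_INR j). pose proof (Rabs_pos x). pose proof (eps_pos n).
  destruct (lam_mu_bounds n) as [_ [Hmu _]].
  apply Rmult_le_compat; try lra.
  - apply Rmult_le_pos; [lra | apply pow_le; lra].
  - apply eps_mul_mu_pow_le_fact.
Qed.

Definition beat_series (phi : R) : nat -> R -> R :=
  series_sum (beat phi) gevrey_weight (Rabs_beat_le_weight phi).

Lemma derivable_pt_lim_beat_series (phi : R) (j : nat) (x : R) :
  derivable_pt_lim (beat_series phi j) x (beat_series phi (S j) x).
Proof. exact (derivable_pt_lim_series_sum _ _ (derivable_pt_lim_beat phi) _ j x). Qed.

Lemma beat_series_cv (phi : R) (j : nat) (x : R) :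
  Un_cv (fun N => sum_f_R0 (fun n => beat phi n j x) N) (beat_series phi j x).
Proof. apply series_sum_cv. Qed.

Lemma Rabs_beat_series_le (phi : R) (j : nat) (x : R) :
  Rabs (beat_series phi j x) <= 2 * gevrey_weight j (Rabs x).
Proof. apply series_sum_abs_le. Qed.

Lemma beat_series_gevrey (s : R) :
  1 <= s -> gevrey s (beat_series 0) (beat_series (- (PI / 2))).
Proof.
  intros Hs K HK. destruct (compact_P1 K HK) as [m [M HmM]].
  set (R0 := Rabs m + Rabs M).
  assert (HR0 : 0 <= R0) by (pose proof (Rabs_pos m); pose proof (Rabs_pos M); unfold R0; lra).
  exists (4 * (1 + R0)). split; [lra |]. intros j x Hx.
  assert (HxR0 : Rabs x <= R0).
  { specialize (HmM x Hx). unfold R0, Rabs.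
    destruct (Rcase_abs x), (Rcase_abs m), (Rcase_abs M); lra. }
  assert (Hweight : gevrey_weight j (Rabs x) <= INR (fact j) * (INR j + R0)).
  { apply Rmult_le_compat_l; [apply pos_INR | lra]. }
  pose proof (INR_succ_le_pow (4 * (1 + R0)) j ltac:(lra)) as Hpow.
  pose proof (fact_le_Rpower j s Hs) as Hfact.
  assert (Hfact1 : 1 <= INR (fact j)) by (apply (le_INR 1), lt_O_fact).
  pose proof (cmod_le_abs (beat_series 0 j x) (beat_series (- (PI / 2)) j x)).
  pose proof (Rabs_beat_series_le 0 j x). pose proof (Rabs_beat_series_le (- (PI / 2)) j x).
  set (CK := 4 * (1 + R0)) in *. simpl pow.
  assert (HjR0 : 4 * (INR j + R0) <= CK * CK ^ j).
  { apply Rle_trans with (CK * (INR j + 1)).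
    - unfold CK. pose proof (pos_INR j). nra.
    - apply Rmult_le_compat_l; [unfold CK; lra | exact Hpow]. }
  assert (0 <= CK * CK ^ j)
    by (apply Rmult_le_pos; [unfold CK; lra | apply pow_le; unfold CK; lra]).
  apply Rle_trans with (INR (fact j) * (4 * (INR j + R0))); [lra |].
  pose proof (pos_INR j). rewrite Rmult_comm. apply Rmult_le_compat; lra.
Qed.

Definition beat_modes (n : nat) : list (R * R * R) :=
  (lam n / (2 * PI), amp n, 0) :: (mu n / (2 * PI), - amp n, 0) :: nil.

Fixpoint beat_modes_upto (N : nat) : list (R * R * R) :=
  match N with
  | O => beat_modes O
  | S k => beat_modes (S k) ++ beat_modes_upto k
  end.

Lemma trig_re_app (l1 l2 : list (R * R * R)) (x : R) :
  trig_re (l1 ++ l2) x = trig_re l1 x + trig_re l2 x.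
Proof. unfold trig_re. induction l1 as [| [[xi p] q] l IH]; simpl; [ring | rewrite IH; ring]. Qed.

Lemma trig_im_app (l1 l2 : list (R * R * R)) (x : R) :
  trig_im (l1 ++ l2) x = trig_im l1 x + trig_im l2 x.
Proof. unfold trig_im. induction l1 as [| [[xi p] q] l IH]; simpl; [ring | rewrite IH; ring]. Qed.

Lemma cos_add_opp_PI2 (a : R) : cos (a + - (PI / 2)) = sin a.
Proof. rewrite <- cos_shift, <- cos_neg. f_equal. ring. Qed.

Lemma two_PI_freq (c x : R) : 2 * PI * (c / (2 * PI)) * x = c * x.
Proof. pose proof PI_neq0. field. exact H. Qed.

Lemma trig_re_beat_modes (n : nat) (x : R) : trig_re (beat_modes n) x = beat 0 n 0 x.
Proof.
  unfold trig_re, beat_modes, beat, wave. simpl.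
  rewrite !two_PI_freq, !Rmult_0_l, !Rplus_0_r. ring.
Qed.

Lemma trig_im_beat_modes (n : nat) (x : R) :
  trig_im (beat_modes n) x = beat (- (PI / 2)) n 0 x.
Proof.
  unfold trig_im, beat_modes, beat, wave. simpl.
  rewrite !Rmult_0_l, !Rplus_0_r, !cos_add_opp_PI2, !two_PI_freq. ring.
Qed.

Lemma trig_re_beat_modes_upto (N : nat) (x : R) :
  trig_re (beat_modes_upto N) x = sum_f_R0 (fun n => beat 0 n 0 x) N.
Proof.
  induction N as [| N IH]; [apply trig_re_beat_modes |].
  cbn [beat_modes_upto]. rewrite trig_re_app, trig_re_beat_modes, IH, tech5. ring.
Qed.

Lemma trig_im_beat_modes_upto (N : nat) (x : R) :
  trig_im (beat_modes_upto N) x = sum_f_R0 (fun n => beat (- (PI / 2)) n 0 x) N.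
Proof.
  induction N as [| N IH]; [apply trig_im_beat_modes |].
  cbn [beat_modes_upto]. rewrite trig_im_app, trig_im_beat_modes, IH, tech5. ring.
Qed.

Lemma beat_series_almost_periodic :
  almost_periodic (beat_series 0 0) (beat_series (- (PI / 2)) 0).
Proof.
  intros e He.
  destruct (pow_lt_1_zero (/ 2) ltac:(rewrite Rabs_pos_eq; lra) (e / 4) ltac:(lra)) as [N HN].
  specialize (HN N (le_n N)). rewrite Rabs_pos_eq in HN by (apply pow_le; lra).
  exists (beat_modes_upto N). intro x.
  rewrite trig_re_beat_modes_upto, trig_im_beat_modes_upto.
  eapply Rle_trans; [apply cmod_le_abs |].
  pose proof (geometric_domination_tail _ 2 (fun n => Rabs_beat0_le 0 n x) _
                (beat_series_cv _ 0 x) N).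
  pose proof (geometric_domination_tail _ 2 (fun n => Rabs_beat0_le (- (PI / 2)) n x) _
                (beat_series_cv _ 0 x) N).
  lra.
Qed.

Lemma wave_proj (c th : R) (j : nat) (x : R) :
  wave c 0 j x * cos th + wave c (- (PI / 2)) j x * sin th = wave c (- th) j x.
Proof.
  unfold wave.
  replace (c * x + - (PI / 2) + INR j * (PI / 2))
    with (c * x + 0 + INR j * (PI / 2) + - (PI / 2)) by ring.
  replace (c * x + - th + INR j * (PI / 2)) with (c * x + 0 + INR j * (PI / 2) - th) by ring.
  rewrite cos_add_opp_PI2, cos_minus. ring.
Qed.

Lemma beat_proj (th : R) (n j : nat) (x : R) :
  beat 0 n j x * cos th + beat (- (PI / 2)) n j x * sin th = beat (- th) n j x.
Proof. unfold beat. rewrite <- (wave_proj (lam n) th), <- (wave_proj (mu n) th). ring. Qed.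

Definition peak (n : nat) : R := PI / eps n.
Definition peak_phase (n : nat) : R := lam n * peak n + PI / 2.

Lemma beat_at_peak (n : nat) : beat (- peak_phase n) n 1 (peak n) = amp n * (lam n + mu n).
Proof.
  pose proof (eps_pos n).
  unfold beat, wave, peak_phase. simpl pow. simpl INR.
  replace (lam n * peak n + - (lam n * peak n + PI / 2) + 1 * (PI / 2)) with 0 by ring.
  replace (mu n * peak n + - (lam n * peak n + PI / 2) + 1 * (PI / 2)) with PI
    by (unfold mu, peak; field; lra).
  rewrite cos_0, cos_PI. ring.
Qed.

Lemma Rabs_beat_far_le (phi : R) (n m : nat) :
  (n < m)%nat -> Rabs (beat phi m 1 (peak n)) <= amp m.
Proof.
  intro Hnm. eapply Rle_trans; [apply Rabs_beat_le |].
  rewrite <- (Rmult_1_r (amp m)) at 2. apply Rmult_le_compat_l; [apply pow_le; lra |].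
  pose proof (eps_far_le n m Hnm). pose proof (eps_pos n). pose proof (eps_pos m).
  pose proof (eps_le1 n). pose proof PI_4. pose proof PI_RGT_0.
  destruct (lam_mu_bounds m) as [_ [Hmu Hcap]].
  assert (Hpeak : Rabs (peak n) = PI / eps n)
    by (apply Rabs_pos_eq; unfold peak; apply Rlt_le, Rdiv_lt_0_compat; lra).
  rewrite Hpeak. simpl pow. simpl INR.
  assert (Hsmall : eps m * mu m <= eps n / 8) by nra.
  apply Rle_trans with (eps n / 8 * (1 + PI / eps n)).
  - rewrite Rmult_1_r. apply Rmult_le_compat_r; [| exact Hsmall].
    apply Rlt_le, Rplus_lt_le_0_compat; [lra | apply Rlt_le, Rdiv_lt_0_compat; lra].
  - replace (eps n / 8 * (1 + PI / eps n)) with ((eps n + PI) / 8) by (field; lra). lra.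
Qed.

Lemma sum_f_R0_ge_peak (p : nat -> R) (n : nat) :
  (forall m, (m < n)%nat -> - (3 * 8 ^ m) <= p m) ->
  2 * 8 ^ n <= p n ->
  (forall m, (n < m)%nat -> - (/ 2) ^ m <= p m) ->
  forall N, (n <= N)%nat -> 8 ^ n - 1 <= sum_f_R0 p N.
Proof.
  intros Hbefore Hpeak Hafter N HN.
  assert (Hhead : forall k, (k < n)%nat -> - (3 / 7) * (8 ^ S k - 1) <= sum_f_R0 p k).
  { induction k as [| k IH]; intro Hk.
    - specialize (Hbefore 0%nat Hk). simpl in *. lra.
    - rewrite tech5. specialize (IH ltac:(lia)). specialize (Hbefore (S k) Hk).
      simpl pow in *. lra. }
  assert (Hupto : 2 * 8 ^ n - (3 / 7) * (8 ^ n - 1) <= sum_f_R0 p n).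
  { destruct n as [| k]; [simpl in *; lra |].
    rewrite tech5. specialize (Hhead k ltac:(lia)). lra. }
  assert (Htail : forall d, sum_f_R0 p n - 1 + (/ 2) ^ (n + d) <= sum_f_R0 p (n + d)).
  { induction d as [| d IH].
    - rewrite Nat.add_0_r. pose proof (pow_inv2_bounds n). lra.
    - rewrite Nat.add_succ_r, tech5. specialize (Hafter (S (n + d)) ltac:(lia)).
      simpl pow in *. lra. }
  replace N with (n + (N - n))%nat by lia.
  specialize (Htail (N - n)%nat).
  pose proof (pow_inv2_bounds (n + (N - n))). pose proof (pow_R1_Rle 8 n ltac:(lra)).
  lra.
Qed.

Lemma cmod_beat_series_at_peak_ge (n : nat) :
  8 ^ n - 1 <= cmod (beat_series 0 1 (peak n)) (beat_series (- (PI / 2)) 1 (peak n)).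
Proof.
  set (th := peak_phase n).
  eapply Rle_trans; [| apply (cmod_ge_proj _ _ (cos th) (sin th))].
  2: { pose proof (sin2_cos2 th). unfold Rsqr in H. simpl. lra. }
  assert (Hsum : forall N, sum_f_R0 (fun m => beat (- th) m 1 (peak n)) N =
      sum_f_R0 (fun m => beat 0 m 1 (peak n)) N * cos th
      + sum_f_R0 (fun m => beat (- (PI / 2)) m 1 (peak n)) N * sin th).
  { induction N as [| N IH]; simpl; [| rewrite IH]; rewrite <- !(beat_proj th); ring. }
  apply (Un_cv_ge_eventually (fun N => sum_f_R0 (fun m => beat (- th) m 1 (peak n)) N) _ _ n).
  - refine (Un_cv_ext _ _ (fun N => eq_sym (Hsum N)) _ _).
    apply CV_plus; apply CV_mult; apply beat_series_cv || apply Un_cv_const.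
  - apply sum_f_R0_ge_peak.
    + intros m _. pose proof (Rabs_beat1_le (- th) m (peak n)).
      pose proof (Rle_abs (- beat (- th) m 1 (peak n))). rewrite Rabs_Ropp in *. lra.
    + unfold th. rewrite beat_at_peak. pose proof (amp_mul_lam n). unfold mu.
      pose proof (eps_pos n). pose proof (pow_inv2_bounds n). unfold amp in *. nra.
    + intros m Hm. pose proof (Rabs_beat_far_le (- th) n m Hm).
      pose proof (Rle_abs (- beat (- th) m 1 (peak n))).
      rewrite Rabs_Ropp in *. unfold amp in *. lra.
Qed.

Theorem mainTheorem1 (s : R) (hs : s > 1) :
  exists (u v : R -> R) (Du Dv : nat -> R -> R),
    derivs_of u Du /\ derivs_of v Dv /\
    almost_periodic u v /\
    gevrey s Du Dv /\
    ~ (exists B C : R, B > 0 /\ C > 0 /\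
         forall (j : nat) (x : R),
           cmod (Du j x) (Dv j x) <= B * C ^ j * Rpower (INR (fact j)) s).
Proof.
  exists (beat_series 0 0), (beat_series (- (PI / 2)) 0),
    (beat_series 0), (beat_series (- (PI / 2))).
  split; [split; [reflexivity | apply derivable_pt_lim_beat_series] |].
  split; [split; [reflexivity | apply derivable_pt_lim_beat_series] |].
  split; [exact beat_series_almost_periodic |].
  split; [apply beat_series_gevrey; lra |].
  intros [B [C [HB [HC Hbound]]]].
  destruct (Pow_x_infinity 8 ltac:(rewrite Rabs_pos_eq; lra) (B * C + 2)) as [n Hn].
  specialize (Hn n (le_n n)). rewrite Rabs_pos_eq in Hn by (apply pow_le; lra).
  specialize (Hbound 1%nat (peak n)).
  replace (Rpower (INR (fact 1)) s) with 1 in Hbound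
    by (simpl; unfold Rpower; rewrite ln_1, Rmult_0_r, exp_0; reflexivity).
  pose proof (cmod_beat_series_at_peak_ge n). simpl pow in Hbound. lra.
Qed.
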